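(* Let $\kappa:\mathbb{R}^2\to[0,\infty]$ be a normalized surface density (a gravitational lens) satisfying the conditions listed in the context. Then $\kappa(x)<\kappa(0)$ for all $x>0$, where for a singular lens $\kappa(0)=+\infty$.
   Context: A gravitational lens (in a single lens plane) is given by a normalized surface density $\kappa$ on the plane $\mathbb{R}^2$ satisfying: (i) Continuity: $\kappa:\mathbb{R}^2\to\mathbb{R}_0^+=[0,\infty)$ is continuous, except possibly at the origin for singular lenses. (ii) Circular symmetry: $\kappa$ depends only on the radius $x=\|\mathbf{x}\|$; write $\kappa=\kappa(x)$. (iii) Finiteness: $\kappa(x)<\infty$ for $x>0$; $\kappa(0)=1/C_1$ for a constant $C_1\ge 0$ (so $\kappa(0)=+\infty$ when $C_1=0$); and $\lim_{x\to\infty}\kappa(x)\,x=C_2$ for a constant $0\le C_2<\infty$. (iv) Self-gravitation: $\kappa(x)<\bar\kappa(x)$ for $x>0$, where $\bar\kappa(x)=\frac{2}{x^2}\int_0^x\kappa(t)\,t\,dt$ is the mean surface density inside radius $x$. The lens is called singular if and only if $C_1=0$, and non-singular otherwise. *)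

From HB Require Import structures.
From mathcomp Require Import all_boot all_order all_algebra.
From mathcomp Require Import all_classical all_reals all_analysis.
Set Implicit Arguments. Unset Strict Implicit. Unset Printing Implicit Defensive.
Import Order.TTheory GRing.Theory Num.Theory.
Import numFieldNormedType.Exports.
Local Open Scope classical_set_scope.
Local Open Scope ring_scope.

(* Radial profile kappa : [0,oo) -> [0,+oo] (only arguments >= 0 matter).
   Mean surface density inside radius x:
   kbar(x) = 2/x^2 * \int_0^x kappa(t) t dt  (Lebesgue integral, in \bar R). *)
Definition mean_density {R : realType} (kappa : R -> \bar R) (x : R) : \bar R :=
  ((2 / x ^+ 2)%:E *
   \int[@lebesgue_measure R]_(t in `[0%R, x]%classic) (kappa t * t%:E))%E.

Definition kappa_origin {R : realType} (C1 : R) : \bar R :=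
  if C1 == 0 then +oo%E else (C1^-1)%:E.

From HB Require Import structures.
From mathcomp Require Import all_boot all_order all_algebra.
From mathcomp Require Import all_classical all_reals all_analysis.
From mathcomp Require Import measurable_realfun ring.
Import Order.TTheory GRing.Theory Num.Theory.
Import numFieldNormedType.Exports.
Local Open Scope classical_set_scope.
Local Open Scope ring_scope.

(* A singular lens is trivial: kappa(0) = +oo while kappa(x) is finite.
   Otherwise kappa is continuous on [0, +oo[.  If kappa(x) >= kappa(0) for
   some x > 0, the maximum of kappa on [0, x] is attained at some x1 > 0,
   and then the mean density inside x1 is at most kappa(x1), contradicting
   self-gravitation at x1. *)

Lemma is_derive_half_sqr (R : realType) (x : R) :
  is_derive x 1 (fun t : R => t ^+ 2 / 2) x.
Proof.
apply: is_derive_eq; rewrite !scaler0 add0r.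
by rewrite /GRing.scale /=; field.
Qed.

Lemma integral_itv0_id (R : realType) (a : R) : 0 < a ->
  (\int[@lebesgue_measure R]_(t in `[0%R, a]) t%:E = (a ^+ 2 / 2)%:E)%E.
Proof.
move=> a_gt0.
have cF x : {for x, continuous (fun t : R => t ^+ 2 / 2)}.
  apply/differentiable_continuous/derivable1_diffP.
  by have [] := is_derive_half_sqr R x.
rewrite (@continuous_FTC2 R id (fun t => t ^+ 2 / 2) 0 a a_gt0).
- by rewrite expr0n /= mul0r oppr0 adde0.
- by apply: continuous_subspaceT => x; exact: cvg_id.
- by split=> //; [exact/cvg_at_right_filter/cF | exact/cvg_at_left_filter/cF].
- move=> x _.
  by rewrite derive1E (@derive_val _ _ _ _ _ _ _ (is_derive_half_sqr R x)).
Qed.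

Lemma mean_density_le (R : realType) (kappa : R -> \bar R) (a M : R) :
  0 < a -> measurable_fun `[0%R, a] kappa ->
  (forall t, 0 <= t <= a -> (0 <= kappa t <= M%:E)%E) ->
  (mean_density kappa a <= M%:E)%E.
Proof.
move=> a_gt0 mk kM.
have M_ge0 : 0 <= M.
  have /andP[k0_ge0 k0_leM] : (0 <= kappa 0%R <= M%:E)%E.
    by apply: kM; rewrite lexx ltW.
  by rewrite -lee_fin (le_trans k0_ge0).
have int_le : (\int[@lebesgue_measure R]_(t in `[0%R, a]) (kappa t * t%:E) <=
               \int[@lebesgue_measure R]_(t in `[0%R, a]) (M%:E * t%:E))%E.
  apply: ge0_le_integral => //.
  - move=> t; rewrite /= in_itv /= => t_in.
    have /andP[k_ge0 _] := kM t t_in; move/andP: t_in => [t0 _].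
    by rewrite mule_ge0 ?lee_fin.
  - exact: emeasurable_funM.
  - apply/measurable_EFinP.
    exact: measurable_funM.
  - move=> t; rewrite /= in_itv /= => t_in.
    have /andP[_ k_leM] := kM t t_in; move/andP: t_in => [t0 _].
    by rewrite lee_wpmul2r ?lee_fin.
rewrite ge0_integralZl_EFin //= in int_le; last first.
  by move=> t; rewrite /= in_itv /= => /andP[t0 _]; rewrite lee_fin.
rewrite integral_itv0_id // in int_le.
have mean_M : ((2 / a ^+ 2)%:E * (M%:E * (a ^+ 2 / 2)%:E) = M%:E :> \bar R)%E.
  by rewrite -!EFinM; congr EFin; field; rewrite gt_eqF.
rewrite /mean_density -[leRHS]mean_M lee_wpmul2l // lee_fin.
by rewrite divr_ge0 // exprn_ge0 // ltW.
Qed.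

(* If g(x) >= g(0), the endpoint x is a maximiser whenever the maximiser given
   by the extreme value theorem is 0. *)
Lemma exists_pos_prefix_max (R : realType) (g : R -> R) (x : R) :
  0 < x -> {within `[0%R, x], continuous g} -> g 0 <= g x ->
  exists2 x1, 0 < x1 <= x & forall t, 0 <= t <= x1 -> g t <= g x1.
Proof.
move=> x_gt0 cg g0x.
have [c c_in cmax] := EVT_max (ltW x_gt0) cg.
move: c_in; rewrite in_itv /= => /andP[c_ge0 c_lex].
have tin t y : 0 <= t -> t <= y -> y <= x -> t \in `[0%R, x].
  by move=> t0 ty yx; rewrite in_itv /= t0 (le_trans ty yx).
have [c0|c_neq0] := eqVneq c 0.
  exists x; first by rewrite x_gt0 lexx.
  move=> t /andP[t0 tx]; apply: (le_trans (cmax t (tin t x t0 tx (lexx _)))).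
  by rewrite c0.
exists c; first by rewrite lt_def c_neq0 c_ge0 c_lex.
by move=> t /andP[t0 tc]; exact/cmax/(tin t c).
Qed.

Theorem lemma1 (R : realType) (kappa : R -> \bar R) (C1 C2 : R) :
  (* (iii) constants *)
  0 <= C1 -> 0 <= C2 ->
  (* (iii) finiteness and nonnegativity for x > 0 *)
  (forall x : R, 0 < x -> (0 <= kappa x)%E /\ (kappa x < +oo)%E) ->
  (* (iii) value at the origin *)
  kappa 0%R = kappa_origin C1 ->
  (* (i) continuity away from the origin *)
  {within `]0, +oo[, continuous (fun x => fine (kappa x))} ->
  (* (i) continuity at the origin for non-singular lenses *)
  (0 < C1 -> {within `[0, +oo[, continuous (fun x => fine (kappa x))}) ->
  (* (iii) asymptotics *)
  (fine (kappa x) * x) @[x --> +oo] --> C2 ->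
  (* (iv) self-gravitation *)
  (forall x : R, 0 < x -> (kappa x < mean_density kappa x)%E) ->
  forall x : R, 0 < x -> (kappa x < kappa 0%R)%E.
Proof.
move=> C1_ge0 _ kfin k0 _ ck0 _ sg x x_gt0.
have [C1_eq0|C1_neq0] := eqVneq C1 0.
  by rewrite k0 /kappa_origin C1_eq0 eqxx; exact: (kfin x x_gt0).2.
have C1_gt0 : 0 < C1 by rewrite lt_def C1_neq0.
set g := fun t => fine (kappa t).
have kg t : 0 <= t -> kappa t = (g t)%:E.
  rewrite le_eqVlt => /predU1P[<-|t_gt0].
    by rewrite /g k0 /kappa_origin (negbTE C1_neq0).
  by have [k_ge0 k_fin] := kfin t t_gt0; rewrite /g fineK // ge0_fin_numE.
have k_ge0 t : 0 <= t -> (0 <= kappa t)%E.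
  rewrite le_eqVlt => /predU1P[<-|/kfin[] //].
  by rewrite k0 /kappa_origin (negbTE C1_neq0) lee_fin invr_ge0.
have cg y : {within `[0%R, y], continuous g}.
  apply: continuous_subspaceW (ck0 C1_gt0) => t /=.
  by rewrite !in_itv /= => /andP[->].
rewrite (kg x (ltW x_gt0)) (kg 0 (lexx _)) lte_fin ltNge; apply/negP => g0x.
have [x1 /andP[x1_gt0 _] x1max] := @exists_pos_prefix_max R g x x_gt0 (cg x) g0x.
have mean_le : (mean_density kappa x1 <= kappa x1)%E.
  rewrite (kg x1 (ltW x1_gt0)); apply: mean_density_le => //.
  - apply: (eq_measurable_fun (EFin \o g)) => [t|].
      by rewrite inE /= in_itv /= => /andP[t0 _]; rewrite kg.
    by apply/measurable_EFinP; exact: subspace_continuous_measurable_fun (cg x1).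
  - move=> t /andP[t0 tx1]; rewrite kg // !lee_fin x1max ?t0 // andbT.
    by rewrite -lee_fin -kg // k_ge0.
by rewrite leNgt sg in mean_le.
Qed.
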